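(* Let $R\subseteq T$ be an extension of rings. Suppose $V$ is a maximal subring of $T$ and $x\in U(R)\setminus V$ satisfies $xV=Vx$ (in particular this holds if $V$ is a duo ring). If $x^{-1}\in V$ (in particular, if $V$ is left integrally closed in $T$), then $R$ has a maximal subring.
   Context: All rings are associative with identity $1\neq0$; subrings contain the identity. A maximal subring of $T$ is a proper subring with no subring strictly between it and $T$. $U(R)$ is the unit group of $R$. A ring is duo if every one-sided ideal is two-sided. $t\in T$ is left integral over $V$ if $t^n+v_{n-1}t^{n-1}+\cdots+v_1t+v_0=0$ for some $n\geq1$ and $v_i\in V$ (coefficients on the left); $V$ is left integrally closed in $T$ if every element of $T$ left integral over $V$ lies in $V$. *)

From mathcomp Require Import all_boot all_algebra.
Set Implicit Arguments. Unset Strict Implicit. Unset Printing Implicit Defensive.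
Import GRing.Theory.
Local Open Scope ring_scope.

Definition subset_of (T : Type) (A B : T -> Prop) : Prop := forall t, A t -> B t.

Definition is_subring (T : nzRingType) (S : T -> Prop) : Prop :=
  [/\ S 1, (forall a b, S a -> S b -> S (a - b)) & (forall a b, S a -> S b -> S (a * b))].

(* S is a maximal subring of the ring A, where A is itself a subring of T
   (subrings of A are exactly the subrings of T contained in A). *)
Definition is_maximal_subring_of (T : nzRingType) (A S : T -> Prop) : Prop :=
  [/\ is_subring S, subset_of S A, (exists a, A a /\ ~ S a) &
      (forall W, is_subring W -> subset_of S W -> subset_of W A ->
         subset_of W S \/ subset_of A W)].

Definition is_unit_in (T : nzRingType) (A : T -> Prop) (x : T) : Prop :=
  A x /\ exists y, A y /\ x * y = 1 /\ y * x = 1.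

Definition comm_set (T : nzRingType) (x : T) (V : T -> Prop) : Prop :=
  (forall v, V v -> exists w, V w /\ x * v = w * x) /\
  (forall v, V v -> exists w, V w /\ v * x = x * w).

From mathcomp Require Import all_boot all_algebra.
From mathcomp Require Import boolp classical_sets.
Local Open Scope classical_set_scope.
Local Open Scope ring_scope.
Import GRing.Theory.

Set Implicit Arguments.
Unset Strict Implicit.
Unset Printing Implicit Defensive.

(* Let y be the inverse of x.  Since xV = Vx, the sets V x^n form an increasing
   union V[x] which is a subring of T containing V and x, so V[x] = T by
   maximality: every t satisfies t y^n ∈ V for some n.  Hence any subring of R
   containing R ∩ V and x contains every r = (r y^n) x^n of R.  By Zorn's lemma
   there is a subring of R maximal among those containing R ∩ V and avoiding x,
   and it is a maximal subring of R. *)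

Lemma Zorn_bigcup_nonempty (U : Type) (P : set (set U)) (A0 : set U) :
  P A0 ->
  (forall F : set (set U), F `<=` P -> F !=set0 -> total_on F subset ->
     P (\bigcup_(X in F) X)) ->
  exists A, P A /\ forall B, A `<` B -> ~ P B.
Proof.
move=> PA0 chainP.
(* Adjoining the empty set makes the union of the empty chain admissible. *)
have [F FP Ftot|A [PA0A Amax]] := @Zorn_bigcup _ (P `|` [set set0]).
  have [[X [FX PX]]|noP] := pselect (exists X, F X /\ P X).
    left; have -> : \bigcup_(X in F) X = \bigcup_(X in F `&` P) X.
      apply/seteqP; split=> [u [Y FY Yu]|u [Y [FY _] Yu]]; last by exists Y.
      by case: (FP Y FY) => [PY|Y0]; [exists Y | rewrite Y0 in Yu].
    apply: chainP => [Y []//| |Y Z [FY _] [FZ _]]; [by exists X | exact: Ftot].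
  right; apply/seteqP; split=> // u [Y FY Yu].
  by case: (FP Y FY) => [PY|Y0]; [case: noP; exists Y | rewrite Y0 in Yu].
have PA : P A.
  case: PA0A => // Aset0; have [A00|A0n0] := pselect (A0 = set0).
    by rewrite Aset0 -A00.
  case: (Amax A0); last by left.
  by rewrite Aset0 properEneq; split=> //; apply/eqP => /esym.
by exists A; split=> // B AB PB; apply: (Amax B AB); left.
Qed.

Section Subrings.
Variable T : nzRingType.
Implicit Types (A B W : set T) (F : set (set T)).

Lemma subring_expr W (y : T) (n : nat) : is_subring W -> W y -> W (y ^+ n).
Proof.
move=> [W1 _ Wmul] Wy; elim: n => [|n IHn]; first by rewrite expr0.
by rewrite exprS; apply: Wmul.
Qed.

Lemma subringI A B : is_subring A -> is_subring B -> is_subring (A `&` B).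
Proof.
move=> [A1 Asub Amul] [B1 Bsub Bmul]; split=> //.
  by move=> a b [Aa Ba] [Ab Bb]; split; [apply: Asub | apply: Bsub].
by move=> a b [Aa Ba] [Ab Bb]; split; [apply: Amul | apply: Bmul].
Qed.

Lemma subring_bigcup_chain F :
  F `<=` @is_subring T -> F !=set0 -> total_on F subset ->
  is_subring (\bigcup_(X in F) X).
Proof.
move=> Fsub [X0 FX0] Ftot.
have common a b : (\bigcup_(X in F) X) a -> (\bigcup_(X in F) X) b ->
    exists2 X, F X & X a /\ X b.
  move=> [X FX Xa] [Y FY Yb].
  by case: (Ftot X Y FX FY) => [XY|YX]; [exists Y => //; split => //; apply: XY
                                       | exists X => //; split => //; apply: YX].
split; first by exists X0 => //; case: (Fsub X0 FX0).
  move=> a b /common /[apply] -[X FX [Xa Xb]].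
  by exists X => //; case: (Fsub X FX) => _ Xsub _; apply: Xsub.
move=> a b /common /[apply] -[X FX [Xa Xb]].
by exists X => //; case: (Fsub X FX) => _ _ Xmul; apply: Xmul.
Qed.

Lemma exists_maximal_subring A S0 (x : T) :
  is_subring S0 -> subset_of S0 A -> A x -> ~ S0 x ->
  (forall W, is_subring W -> subset_of S0 W -> W x -> subset_of A W) ->
  exists S, is_maximal_subring_of A S.
Proof.
move=> S0sub S0A Ax S0x absorb.
pose avoiding W := [/\ is_subring W, subset_of S0 W, subset_of W A & ~ W x].
have [F Favoid F0 Ftot|S [[Ssub S0S SA Sx] Smax]] :=
    @Zorn_bigcup_nonempty _ avoiding S0 (And4 S0sub (fun _ => id) S0A S0x).
  have [X0 FX0] := F0; split.
  - by apply: subring_bigcup_chain => // X /Favoid [].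
  - by move=> t S0t; exists X0 => //; case: (Favoid X0 FX0) => _ + _ _; apply.
  - by move=> t [X /Favoid [_ _ XA _]]; apply: XA.
  - by move=> [X /Favoid [_ _ _]].
exists S; split=> //; first by exists x.
move=> W Wsub SW WA; have [Wx|Wnx] := pselect (W x).
  by right; apply: absorb => // t /S0S; apply: SW.
have [WS|WnS] := pselect (subset_of W S); [by left | exfalso].
apply: (Smax W); last by split=> // t /S0S; apply: SW.
by rewrite properEneq; split=> //; apply/eqP => eqSW; apply: WnS; rewrite -eqSW.
Qed.

Lemma expr_linv (x y : T) (n : nat) : y * x = 1 -> y ^+ n * x ^+ n = 1.
Proof.
move=> yx; elim: n => [|n IHn]; first by rewrite !expr0 mulr1.
by rewrite exprSr exprS -mulrA (mulrA y) yx mul1r.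
Qed.

Lemma comm_set_inv (V : set T) (x y : T) :
  comm_set x V -> x * y = 1 -> y * x = 1 ->
  forall v, V v -> exists w, V w /\ v * y = y * w.
Proof.
move=> [xVVx _] xy yx v Vv; have [w [Vw xv]] := xVVx v Vv; exists w; split=> //.
have -> : v * y = y * (x * v) * y by rewrite mulrA yx mul1r.
by rewrite xv -!mulrA xy mulr1.
Qed.

Lemma right_comm_expr (V : set T) (y : T) :
  (forall v, V v -> exists w, V w /\ v * y = y * w) ->
  forall n v, V v -> exists w, V w /\ v * y ^+ n = y ^+ n * w.
Proof.
move=> Vy; elim=> [|n IHn] v Vv; first by exists v; rewrite !expr0 mulr1 mul1r.
have [w [Vw vyn]] := IHn v Vv; have [w' [Vw' wy]] := Vy w Vw.
by exists w'; split=> //; rewrite exprSr mulrA vyn -mulrA wy mulrA.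
Qed.

(* With x the inverse of y, this is the union of the sets V x^n. *)
Definition saturation (V : set T) (y : T) : set T :=
  [set t | exists n, V (t * y ^+ n)].

Lemma subring_saturation (V : set T) (y : T) :
  is_subring V -> V y -> (forall v, V v -> exists w, V w /\ v * y = y * w) ->
  is_subring (saturation V y).
Proof.
move=> Vsub Vy Vcomm; have [V1 Vdiff Vmul] := Vsub.
split; first by exists 0%N; rewrite expr0 mulr1.
  move=> a b [n Va] [m Vb]; exists (n + m)%N; rewrite mulrBl; apply: Vdiff.
    by rewrite exprD mulrA; apply: Vmul => //; apply: subring_expr.
  by rewrite addnC exprD mulrA; apply: Vmul => //; apply: subring_expr.
move=> a b [n Va] [m Vb]; exists (m + n)%N.
have [w [Vw byn]] := right_comm_expr Vcomm n Vb.
by rewrite exprD mulrA -(mulrA a) -(mulrA a) byn mulrA; apply: Vmul.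
Qed.

Lemma saturation_maximal_subring (V : set T) (x y : T) :
  is_maximal_subring_of setT V -> ~ V x -> comm_set x V ->
  V y -> x * y = 1 -> y * x = 1 -> forall t, saturation V y t.
Proof.
move=> [Vsub _ _ Vmax] Vx xV Vy xy yx.
have satsub := subring_saturation Vsub Vy (comm_set_inv xV xy yx).
have [v Vv|//|satV|satT t] := Vmax _ satsub; last exact: satT.
  by exists 0%N; rewrite expr0 mulr1.
by case: Vx; apply: satV; exists 1%N; rewrite expr1 xy; case: Vsub.
Qed.

End Subrings.

Theorem proposition3p3 (T : nzRingType) (R V : T -> Prop) (x : T) :
  is_subring R ->
  is_maximal_subring_of (fun _ => True) V ->
  is_unit_in R x -> ~ V x ->
  comm_set x V ->
  (forall y, x * y = 1 -> y * x = 1 -> V y) ->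
  exists S, is_maximal_subring_of R S.
Proof.
move=> Rsub Vmax [Rx [y [Ry [xy yx]]]] Vx xV Vinv.
have Vy := Vinv y xy yx.
have Vsub : is_subring V by case: Vmax.
have sat := saturation_maximal_subring Vmax Vx xV Vy xy yx.
apply: (@exists_maximal_subring _ R (R `&` V) x) => //; first exact: subringI.
- by move=> t [].
- by case.
move=> W Wsub RVW Wx r Rr; have [n Vryn] := sat r.
have -> : r = r * y ^+ n * x ^+ n by rewrite -mulrA expr_linv // mulr1.
case: (Wsub) => _ _ Wmul; apply: Wmul; last exact: subring_expr.
apply: RVW; split=> //; case: (Rsub) => _ _ Rmul.
by apply: Rmul => //; apply: subring_expr.
Qed.
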